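(* There exist metric spaces $X,Y$ and a Lipschitz function $f\colon X\to Y$ such that $\operatorname{asdim}(Y)=0$ and $\sup\{\operatorname{asdim}(f^{-1}(B)) : B\subset Y \text{ bounded}\}=0$, but $\operatorname{asdim}(X)>0$.
   Context: For a metric space $Z$, $\operatorname{asdim}(Z)\le n$ iff for every $r>0$ there are $D<\infty$ and families $\mathcal U_1,\dots,\mathcal U_{n+1}$ of subsets of $Z$ covering $Z$, each $r$-disjoint (points in different members of a family are at distance $\ge r$), with members of diameter $\le D$; $\operatorname{asdim}(Z)$ is the least such $n$. *)

From Stdlib Require Import Reals.
Open Scope R_scope.

Record MetricSpace := {
  mcarrier :> Type;
  mdist : mcarrier -> mcarrier -> R;
  mdist_ge0 : forall x y, 0 <= mdist x y;
  mdist_eq0 : forall x y, mdist x y = 0 <-> x = y;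
  mdist_sym : forall x y, mdist x y = mdist y x;
  mdist_tri : forall x y z, mdist x z <= mdist x y + mdist y z
}.

Arguments mdist {m} _ _.

Definition family (X : MetricSpace) := (X -> Prop) -> Prop.

Definition r_disjoint (X : MetricSpace) (r : R) (F : family X) : Prop :=
  forall U V, F U -> F V -> U <> V ->
    forall x y, U x -> V y -> r <= mdist x y.

Definition diam_bounded (X : MetricSpace) (D : R) (F : family X) : Prop :=
  forall U, F U -> forall x y, U x -> U y -> mdist x y <= D.

Definition asdim_le_on (X : MetricSpace) (A : X -> Prop) (n : nat) : Prop :=
  forall r : R, 0 < r ->
    exists (D : R) (F : nat -> family X),
      (forall i, (i <= n)%nat -> r_disjoint X r (F i)) /\
      (forall i, (i <= n)%nat -> diam_bounded X D (F i)) /\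
      (forall i, (i <= n)%nat -> forall U, F i U -> forall x, U x -> A x) /\
      (forall z, A z -> exists i U, (i <= n)%nat /\ F i U /\ U z).

Definition asdim_le (X : MetricSpace) (n : nat) : Prop :=
  asdim_le_on X (fun _ => True) n.

Definition bounded_set (X : MetricSpace) (B : X -> Prop) : Prop :=
  exists R0 : R, forall x y, B x -> B y -> mdist x y <= R0.

Definition lipschitz (X Y : MetricSpace) (f : X -> Y) : Prop :=
  exists L : R, 0 <= L /\ forall x x', mdist (f x) (f x') <= L * mdist x x'.

(* Take Y = {n^2} and X = the union of the integer intervals [n^2, n^2 + n], both as
   subspaces of N, and let f send n^2 + k to n^2.  Y is asdim 0 since its points spread
   apart, and f has finite fibres over bounded sets, so preimages of bounded sets are
   bounded.  But X contains arbitrarily long 1-chains, which no uniformly bounded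
   2-disjoint family can cover, so asdim X > 0. *)

From Stdlib Require Import Reals.
From Stdlib Require Import Arith Lia Lra Classical.

Lemma asdim_le0_of_bounded (X : MetricSpace) (A : X -> Prop) :
  bounded_set X A -> asdim_le_on X A 0.
Proof.
  intros [R0 HA] r _.
  exists R0, (fun _ U => U = A).
  split; [|split; [|split]].
  - intros i _ U V -> -> UV. now contradiction UV.
  - intros i _ U -> x y Ax Ay. exact (HA x y Ax Ay).
  - intros i _ U -> x Ax. exact Ax.
  - intros z Az. exists 0%nat, A. auto.
Qed.

(* Cover by [K] and the singletons outside [K]. *)
Lemma asdim_le0_of_sparse_off_bounded (X : MetricSpace) :
  (forall r, 0 < r -> exists K : X -> Prop,
     bounded_set X K /\
     forall x y, x <> y -> ~ (K x /\ K y) -> r <= mdist x y) ->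
  asdim_le X 0.
Proof.
  intros Hsparse r Hr.
  destruct (Hsparse r Hr) as [K [[R0 HK] Hfar]].
  exists (Rmax R0 0), (fun _ U => U = K \/ exists z, ~ K z /\ U = (fun y => y = z)).
  split; [|split; [|split]].
  - intros i _ U V HU HV UV x y Ux Vy.
    destruct HU as [-> | [a [Ka ->]]]; destruct HV as [-> | [b [Kb ->]]].
    + now contradiction UV.
    + subst y. apply Hfar; [intros <-; contradiction | tauto].
    + subst x. apply Hfar; [intros ->; contradiction | tauto].
    + subst x y. apply Hfar; [intros <-; contradiction UV; reflexivity | tauto].
  - intros i _ U [-> | [a [_ ->]]] x y Ux Uy.
    + eapply Rle_trans; [exact (HK x y Ux Uy) | apply Rmax_l].
    + subst x y. rewrite (proj2 (mdist_eq0 _ a a) eq_refl). apply Rmax_r.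
  - trivial.
  - intros z _. exists 0%nat.
    destruct (classic (K z)) as [Kz | nKz].
    + exists K. auto.
    + exists (fun y => y = z). split; [lia | split; [right; eauto | reflexivity]].
Qed.

(* A 2-disjoint cover containing [c 0] must contain the whole chain in one member. *)
Lemma not_asdim_le0_of_long_chains (X : MetricSpace) (r : R) :
  0 < r ->
  (forall D, exists (c : nat -> X) (m : nat),
     (forall k, (k < m)%nat -> mdist (c k) (c (S k)) < r) /\ D < mdist (c 0%nat) (c m)) ->
  ~ asdim_le X 0.
Proof.
  intros Hr Hchains Hasdim.
  destruct (Hasdim r Hr) as [D [F [Hdisj [Hdiam [_ Hcover]]]]].
  destruct (Hchains D) as [c [m [Hstep Hlong]]].
  destruct (Hcover (c 0%nat) I) as [i [U0 [Hi [HU0 U0c0]]]].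
  assert (i = 0%nat) as -> by lia.
  assert (Hchain : forall k, (k <= m)%nat -> U0 (c k)).
  { induction k as [|k IH]; intros Hk; [exact U0c0|].
    destruct (Hcover (c (S k)) I) as [i [V [Hi' [HV Vck]]]].
    assert (i = 0%nat) as -> by lia.
    destruct (classic (V = U0)) as [-> | VU0]; [exact Vck|].
    pose proof (Hdisj 0%nat (le_n 0) V U0 HV HU0 VU0 _ _ Vck (IH ltac:(lia))) as Hge.
    rewrite mdist_sym in Hge. pose proof (Hstep k ltac:(lia)). lra. }
  pose proof (Hdiam 0%nat (le_n 0) U0 HU0 _ _ U0c0 (Hchain m (le_n m))). lra.
Qed.

Definition natdist (a b : nat) : nat := (a - b) + (b - a).

Section NatPullback.
Variables (T : Type) (g : T -> nat).
Hypothesis g_inj : forall x y, g x = g y -> x = y.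

Lemma natdist_pullback_ge0 (x y : T) : 0 <= INR (natdist (g x) (g y)).
Proof. apply pos_INR. Qed.

Lemma natdist_pullback_eq0 (x y : T) : INR (natdist (g x) (g y)) = 0 <-> x = y.
Proof.
  split.
  - intros H. apply g_inj. change 0 with (INR 0) in H. apply INR_eq in H.
    unfold natdist in H. lia.
  - intros ->. unfold natdist. now rewrite Nat.sub_diag.
Qed.

Lemma natdist_pullback_sym (x y : T) :
  INR (natdist (g x) (g y)) = INR (natdist (g y) (g x)).
Proof. unfold natdist. f_equal. lia. Qed.

Lemma natdist_pullback_tri (x y z : T) :
  INR (natdist (g x) (g z)) <= INR (natdist (g x) (g y)) + INR (natdist (g y) (g z)).
Proof. rewrite <- plus_INR. apply le_INR. unfold natdist. lia. Qed.

Definition nat_pullback_space : MetricSpace :=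
  {| mcarrier := T;
     mdist := fun x y => INR (natdist (g x) (g y));
     mdist_ge0 := natdist_pullback_ge0;
     mdist_eq0 := natdist_pullback_eq0;
     mdist_sym := natdist_pullback_sym;
     mdist_tri := natdist_pullback_tri |}.

End NatPullback.

Lemma sq_trichotomy (a b : nat) :
  (a < b /\ a * a + a + b <= b * b)%nat \/ a = b \/ (b < a /\ b * b + b + a <= a * a)%nat.
Proof. destruct (Nat.lt_total a b) as [L | [L | L]]; [left | right; left | right; right]; nia. Qed.

Lemma sq_inj (n m : nat) : (n * n = m * m)%nat -> n = m.
Proof.
  intros E. destruct (sq_trichotomy n m) as [? | [? | ?]]; lia.
Qed.

Definition squares : MetricSpace := nat_pullback_space nat (fun n => (n * n)%nat) sq_inj.

Definition staircase_pt := {p : nat * nat | (snd p <= fst p)%nat}.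

Definition staircase_code (x : staircase_pt) : nat :=
  (fst (proj1_sig x) * fst (proj1_sig x) + snd (proj1_sig x))%nat.

Lemma staircase_code_inj (x y : staircase_pt) : staircase_code x = staircase_code y -> x = y.
Proof.
  destruct x as [[n k] hk], y as [[m j] hj]; unfold staircase_code; simpl in *; intros E.
  assert (n = m) as <- by (destruct (sq_trichotomy n m) as [? | [? | ?]]; lia).
  assert (k = j) as <- by lia.
  f_equal. apply le_unique.
Qed.

Definition staircase : MetricSpace :=
  nat_pullback_space staircase_pt staircase_code staircase_code_inj.

Definition staircase_proj (x : staircase) : squares := fst (proj1_sig x).

Lemma staircase_proj_lipschitz : lipschitz staircase squares staircase_proj.
Proof.
  exists 2. split; [lra|].
  intros [[n k] hk] [[m j] hj]; simpl in *.
  replace 2 with (INR 2) by (simpl; lra). rewrite <- mult_INR. apply le_INR.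
  unfold staircase_proj, staircase_code, natdist; simpl.
  destruct (sq_trichotomy n m) as [? | [<- | ?]]; lia.
Qed.

Lemma squares_far (N x y : nat) :
  x <> y -> (N <= x \/ N <= y)%nat -> (N <= natdist (x * x) (y * y))%nat.
Proof.
  intros xy Hxy. unfold natdist.
  destruct (sq_trichotomy x y) as [? | [? | ?]]; lia.
Qed.

Lemma asdim_squares : asdim_le squares 0.
Proof.
  apply asdim_le0_of_sparse_off_bounded. intros r _.
  destruct (INR_unbounded r) as [N HN].
  exists (fun n : squares => (n < N)%nat). split.
  - exists (INR (N * N)). intros x y Hx Hy. simpl. apply le_INR.
    unfold natdist. nia.
  - intros x y xy Hxy. simpl.
    apply Rle_trans with (INR N); [lra|]. apply le_INR, squares_far; [exact xy | lia].
Qed.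

Lemma staircase_natdist_le (n k m j : nat) :
  (k <= n)%nat -> (j <= m)%nat ->
  (natdist (n * n + k) (m * m + j) <= natdist (n * n) (m * m) + n + m)%nat.
Proof. unfold natdist. lia. Qed.

Lemma staircase_proj_preimage_bounded (B : squares -> Prop) :
  bounded_set squares B -> bounded_set staircase (fun x => B (staircase_proj x)).
Proof.
  intros [R0 HB].
  destruct (classic (exists b0, B b0)) as [[b0 Bb0] | NB].
  - exists (3 * R0 + 2 * INR (b0 * b0)).
    intros [[n k] hk] [[m j] hj]; unfold staircase_proj; simpl in *; intros Bn Bm.
    pose proof (HB n m Bn Bm) as Hnm. pose proof (HB n b0 Bn Bb0) as Hn.
    pose proof (HB m b0 Bm Bb0) as Hm. simpl in Hnm, Hn, Hm.
    assert (Hsize : forall a, (a <= natdist (a * a) (b0 * b0) + b0 * b0)%nat)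
      by (intros a; assert (a <= a * a)%nat by nia; unfold natdist; lia).
    pose proof (le_INR _ _ (staircase_natdist_le n k m j hk hj)) as Hdist.
    pose proof (le_INR _ _ (Hsize n)) as Hszn. pose proof (le_INR _ _ (Hsize m)) as Hszm.
    rewrite !plus_INR in Hdist; rewrite !plus_INR in Hszn, Hszm.
    unfold staircase_code; simpl. lra.
  - exists 0. intros x y Bx _. contradiction NB. eauto.
Qed.

Lemma staircase_long_chains (D : R) :
  exists (c : nat -> staircase) (m : nat),
    (forall k, (k < m)%nat -> mdist (c k) (c (S k)) < 2) /\ D < mdist (c 0%nat) (c m).
Proof.
  destruct (INR_unbounded D) as [N HN].
  exists (fun k => exist (fun p : nat * nat => (snd p <= fst p)%nat)
                   (N, Nat.min k N) (Nat.le_min_r k N)), N.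
  split.
  - intros k _. cbn [mdist staircase nat_pullback_space].
    apply Rle_lt_trans with (INR 1); [apply le_INR | simpl; lra].
    unfold natdist, staircase_code; cbn [fst snd proj1_sig]. lia.
  - cbn [mdist staircase nat_pullback_space]. unfold staircase_code; cbn [fst snd proj1_sig].
    replace (natdist (N * N + Nat.min 0 N) (N * N + Nat.min N N)) with N
      by (unfold natdist; lia).
    lra.
Qed.

Theorem mainTheorem12 :
  exists (X Y : MetricSpace) (f : X -> Y),
    lipschitz X Y f /\
    asdim_le Y 0 /\
    (forall B : Y -> Prop, bounded_set Y B ->
       asdim_le_on X (fun x => B (f x)) 0) /\
    ~ asdim_le X 0.
Proof.
  exists staircase, squares, staircase_proj.
  split; [exact staircase_proj_lipschitz|].
  split; [exact asdim_squares|].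
  split.
  - intros B HB. apply asdim_le0_of_bounded, staircase_proj_preimage_bounded, HB.
  - apply (not_asdim_le0_of_long_chains _ 2); [lra | exact staircase_long_chains].
Qed.
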